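(* Let $G$ be a simple undirected graph with infinite chromatic number $\chi(G)$. Then there is a minor $M$ of $G$ such that $M\not\cong G$ and $\chi(M)=\chi(G)$.
   Context: Graphs are simple and undirected: $G=(V,E)$ with $E \subseteq \{\{x,y\}: x,y\in V,\ x\neq y\}$. $\chi(G)$ denotes the chromatic number of $G$, i.e. the least cardinal $\lambda$ such that there is a graph homomorphism $G \to K_\lambda$; $K_\alpha$ is the complete graph on $\alpha$ vertices. Disjoint sets $S,T\subseteq V(G)$ are connected to each other if there are $s\in S$, $t\in T$ with $\{s,t\}\in E(G)$. For a collection $\mathcal D$ of pairwise disjoint, nonempty subsets of $V(G)$, each inducing a connected subgraph, let $G(\mathcal D)$ be the graph with vertex set $\mathcal D$ in which distinct $d,e\in\mathcal D$ are adjacent iff $d$ and $e$ are connected to each other. A graph $M$ is a minor of $G$ if there is such a collection $\mathcal D$ and an injective graph homomorphism $M \to G(\mathcal D)$. *)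

From Stdlib Require Import Relations Vectors.Fin.

Definition simple_graph (V : Type) (E : V -> V -> Prop) : Prop :=
  (forall x y, E x y -> E y x) /\ (forall x, ~ E x x).

(* Graph homomorphism G -> K_K : a proper colouring with colour set K
   (adjacent vertices of K_K are exactly distinct colours). *)
Definition hom_to_complete (V : Type) (E : V -> V -> Prop) (K : Type) : Prop :=
  exists c : V -> K, forall x y, E x y -> c x <> c y.

Definition chi_infinite (V : Type) (E : V -> V -> Prop) : Prop :=
  forall n : nat, ~ hom_to_complete V E (Fin.t n).

(* chi(G) = chi(M): since chi is the least cardinal lambda with G -> K_lambda,
   the two least cardinals coincide iff the same colour sets work for both. *)
Definition same_chi (V : Type) (E : V -> V -> Prop)
                    (W : Type) (F : W -> W -> Prop) : Prop :=
  forall K : Type, hom_to_complete V E K <-> hom_to_complete W F K.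

Definition induces_connected (V : Type) (E : V -> V -> Prop) (S : V -> Prop) : Prop :=
  forall x y, S x -> S y ->
    clos_refl_trans V (fun a b => S a /\ S b /\ E a b) x y.

Definition sets_connected (V : Type) (E : V -> V -> Prop) (S T : V -> Prop) : Prop :=
  exists s t, S s /\ T t /\ E s t.

(* A collection D of pairwise disjoint, nonempty, connected vertex sets,
   given as an indexed family B : I -> set V (distinct indices = distinct members). *)
Definition branch_collection (V : Type) (E : V -> V -> Prop)
           (I : Type) (B : I -> V -> Prop) : Prop :=
  (forall i, exists v, B i v) /\
  (forall i, induces_connected V E (B i)) /\
  (forall i j, i <> j -> forall v, B i v -> B j v -> False).

Definition contracted_adj (V : Type) (E : V -> V -> Prop)
           (I : Type) (B : I -> V -> Prop) (i j : I) : Prop :=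
  i <> j /\ sets_connected V E (B i) (B j).

Definition is_minor (W : Type) (F : W -> W -> Prop)
                    (V : Type) (E : V -> V -> Prop) : Prop :=
  exists (I : Type) (B : I -> V -> Prop) (phi : W -> I),
    branch_collection V E I B /\
    (forall a b, phi a = phi b -> a = b) /\
    (forall a b, F a b -> contracted_adj V E I B (phi a) (phi b)).

Definition graph_iso (W : Type) (F : W -> W -> Prop)
                     (V : Type) (E : V -> V -> Prop) : Prop :=
  exists h : W -> V,
    (forall a b, h a = h b -> a = b) /\
    (forall v, exists a, h a = v) /\
    (forall a b, F a b <-> E (h a) (h b)).

(** If [G] has an isolated vertex, delete all isolated vertices; otherwise
    delete the edges at one vertex [v].  Either way the result [M] is a
    spanning or induced subgraph, hence a minor, and exactly one of [M], [G]
    has an isolated vertex, so they are not isomorphic.  A colouring of [G]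
    restricts to [M].  Conversely, in the first case the deleted vertices may
    take any colour; in the second, the colour set [K] of [M] is infinite
    (a finite one would colour [G] with one more colour), so a Hilbert-hotel
    injection [K -> K] frees a colour for [v]. *)

From Stdlib Require Import ClassicalEpsilon Classical List Relations Vectors.Fin
  ProofIrrelevance.

Definition isolated (V : Type) (E : V -> V -> Prop) (x : V) : Prop :=
  forall y, ~ E x y.

Definition isolate_vertex (V : Type) (E : V -> V -> Prop) (v : V) (x y : V) : Prop :=
  E x y /\ x <> v /\ y <> v.

Lemma singleton_branch_collection (V : Type) (E : V -> V -> Prop) :
  branch_collection V E V (fun i x => x = i).
Proof.
  split; [|split].
  - intro i. exists i. reflexivity.
  - intros i x y Hx Hy. subst. apply rt_refl.
  - intros i j Hij w H1 H2. subst. auto.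
Qed.

Lemma is_minor_of_injective_hom (W : Type) (F : W -> W -> Prop)
  (V : Type) (E : V -> V -> Prop) (h : W -> V)
  (Hirr : forall x, ~ E x x) (Hinj : forall a b, h a = h b -> a = b)
  (Hhom : forall a b, F a b -> E (h a) (h b)) :
  is_minor W F V E.
Proof.
  exists V, (fun i x => x = i), h.
  split; [apply singleton_branch_collection | split; [exact Hinj|]].
  intros a b Hab. split.
  - intro Heq. apply (Hirr (h b)). rewrite <- Heq at 1. auto.
  - exists (h a), (h b). auto.
Qed.

Lemma hom_to_complete_comap (W : Type) (F : W -> W -> Prop)
  (V : Type) (E : V -> V -> Prop) (h : W -> V) (K : Type)
  (Hhom : forall a b, F a b -> E (h a) (h b)) :
  hom_to_complete V E K -> hom_to_complete W F K.
Proof.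
  intros [c Hc]. exists (fun a => c (h a)). auto.
Qed.

Lemma graph_iso_has_isolated (W : Type) (F : W -> W -> Prop)
  (V : Type) (E : V -> V -> Prop) :
  graph_iso W F V E -> ((exists a, isolated W F a) <-> (exists v, isolated V E v)).
Proof.
  intros [h [_ [hsurj hE]]]. split.
  - intros [a Ha]. exists (h a). intros y Hy.
    destruct (hsurj y) as [b <-]. apply (Ha b), hE, Hy.
  - intros [v Hv]. destruct (hsurj v) as [a <-]. exists a.
    intros b Hab. apply (Hv (h b)), hE, Hab.
Qed.

Lemma chi_infinite_has_edge (V : Type) (E : V -> V -> Prop) :
  chi_infinite V E -> exists x y, E x y.
Proof.
  intro Hchi. apply NNPP. intro Hn. apply (Hchi 1).
  exists (fun _ => Fin.F1). intros x y Hxy. exfalso. eauto.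
Qed.

Lemma list_injects_into_fin (K : Type) (l : list K) :
  exists f : K -> Fin.t (S (length l)),
    forall k k', In k l -> In k' l -> f k = f k' -> k = k'.
Proof.
  induction l as [|a l [f Hf]].
  - exists (fun _ => Fin.F1). intros k k' [].
  - exists (fun k => if excluded_middle_informative (k = a) then Fin.F1
                     else Fin.FS (f k)).
    intros k k' Hk Hk' Heq.
    destruct (excluded_middle_informative (k = a)) as [e|e];
    destruct (excluded_middle_informative (k' = a)) as [e'|e'];
      try congruence.
    apply Fin.FS_inj in Heq.
    destruct Hk as [Hk|Hk]; [congruence|].
    destruct Hk' as [Hk'|Hk']; [congruence|].
    auto.
Qed.

Lemma hom_to_complete_colours_infinite (V : Type) (E : V -> V -> Prop) (K : Type) :
  chi_infinite V E -> hom_to_complete V E K -> forall l : list K, exists k, ~ In k l.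
Proof.
  intros Hchi [c Hc] l. apply NNPP. intro Hcover.
  assert (Hall : forall k, In k l).
  { intro k. apply NNPP. intro Hk. apply Hcover. eauto. }
  destruct (list_injects_into_fin K l) as [f Hf].
  apply (Hchi (S (length l))). exists (fun x => f (c x)).
  intros x y Hxy Heq. apply (Hc x y Hxy), Hf; auto.
Qed.

Lemma nat_injection_of_infinite (K : Type) (HK : forall l : list K, exists k, ~ In k l) :
  exists g : nat -> K, forall m n, g m = g n -> m = n.
Proof.
  destruct (constructive_indefinite_description _
              (choice (fun l k => ~ In k l) HK)) as [pick Hpick].
  set (prefix := fix prefix (n : nat) : list K :=
         match n with 0 => nil | S m => pick (prefix m) :: prefix m end).
  exists (fun n => pick (prefix n)).
  assert (Hearlier : forall m n, m < n -> In (pick (prefix m)) (prefix n)).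
  { intros m n Hmn. induction Hmn; simpl; auto. }
  intros m n Heq.
  destruct (PeanoNat.Nat.lt_trichotomy m n) as [Hlt|[Hmn|Hlt]]; auto; exfalso.
  - apply (Hpick (prefix n)). rewrite <- Heq. auto.
  - apply (Hpick (prefix m)). rewrite Heq. auto.
Qed.

(* Hilbert's hotel: shift [g n] to [g (S n)] and fix everything else. *)
Lemma shift_of_nat_injection (K : Type) (g : nat -> K)
  (Hg : forall m n, g m = g n -> m = n) :
  exists sh : K -> K, (forall k k', sh k = sh k' -> k = k') /\ forall k, sh k <> g 0.
Proof.
  exists (fun k => match excluded_middle_informative (exists n, k = g n) with
                   | left H => g (S (proj1_sig (constructive_indefinite_description _ H)))
                   | right _ => k end).
  split.
  - intros k k'.
    destruct (excluded_middle_informative (exists n, k = g n)) as [H|H];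
    destruct (excluded_middle_informative (exists n, k' = g n)) as [H'|H'].
    + destruct (constructive_indefinite_description _ H) as [n Hn].
      destruct (constructive_indefinite_description _ H') as [n' Hn']. simpl.
      intro Heq. apply Hg in Heq. injection Heq as ->. congruence.
    + destruct (constructive_indefinite_description _ H) as [n Hn]. simpl.
      intro Heq. exfalso. apply H'. eauto.
    + destruct (constructive_indefinite_description _ H') as [n Hn]. simpl.
      intro Heq. exfalso. apply H. eauto.
    + auto.
  - intro k. destruct (excluded_middle_informative (exists n, k = g n)) as [H|H].
    + intro Heq. apply Hg in Heq. discriminate.
    + intro Heq. apply H. eauto.
Qed.

Section IsolateVertex.

Variables (V : Type) (E : V -> V -> Prop) (v : V).
Hypothesis Hirr : forall x, ~ E x x.

Lemma hom_to_complete_unisolate (K K' : Type) (sh : K -> K') (k0 : K')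
  (Hsh : forall k k', sh k = sh k' -> k = k') (Hk0 : forall k, sh k <> k0) :
  hom_to_complete V (isolate_vertex V E v) K -> hom_to_complete V E K'.
Proof.
  intros [c Hc].
  exists (fun u => if excluded_middle_informative (u = v) then k0 else sh (c u)).
  intros x y Hxy.
  destruct (excluded_middle_informative (x = v)) as [->|Hx];
  destruct (excluded_middle_informative (y = v)) as [->|Hy].
  - exfalso. exact (Hirr v Hxy).
  - intro Heq. exact (Hk0 _ (eq_sym Heq)).
  - apply Hk0.
  - intro Heq. apply (Hc x y); [repeat split; auto | exact (Hsh _ _ Heq)].
Qed.

Lemma chi_infinite_isolate_vertex :
  chi_infinite V E -> chi_infinite V (isolate_vertex V E v).
Proof.
  intros Hchi n Hcol. apply (Hchi (S n)).
  apply (hom_to_complete_unisolate _ _ Fin.FS Fin.F1 Fin.FS_inj); auto.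
  intros k Heq. discriminate.
Qed.

Lemma same_chi_isolate_vertex :
  chi_infinite V E -> same_chi V (isolate_vertex V E v) V E.
Proof.
  intros Hchi K. split.
  - intro Hcol.
    pose proof (hom_to_complete_colours_infinite _ _ K
                  (chi_infinite_isolate_vertex Hchi) Hcol) as HK.
    destruct (nat_injection_of_infinite K HK) as [g Hg].
    destruct (shift_of_nat_injection K g Hg) as [sh [Hsh Hk0]].
    exact (hom_to_complete_unisolate K K sh (g 0) Hsh Hk0 Hcol).
  - apply (hom_to_complete_comap _ _ _ _ (fun x => x)).
    intros a b [Hab _]. exact Hab.
Qed.

End IsolateVertex.

Lemma hom_to_complete_extend_induced (V : Type) (E : V -> V -> Prop)
  (P : V -> Prop) (Hcover : forall x y, E x y -> P x /\ P y) (K : Type) (k0 : K) :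
  hom_to_complete {x | P x} (fun a b => E (proj1_sig a) (proj1_sig b)) K ->
  hom_to_complete V E K.
Proof.
  intros [c Hc].
  exists (fun x => match excluded_middle_informative (P x) with
                   | left H => c (exist _ x H) | right _ => k0 end).
  intros x y Hxy.
  destruct (Hcover x y Hxy) as [Hx Hy].
  destruct (excluded_middle_informative (P x)) as [H1|]; [|contradiction].
  destruct (excluded_middle_informative (P y)) as [H2|]; [|contradiction].
  exact (Hc (exist _ x H1) (exist _ y H2) Hxy).
Qed.

Lemma chi_minor_drop_isolated (V : Type) (E : V -> V -> Prop)
  (HG : simple_graph V E) (Hchi : chi_infinite V E) (u : V) (Hu : isolated V E u) :
  exists (W : Type) (F : W -> W -> Prop),
    simple_graph W F /\ is_minor W F V E /\ ~ graph_iso W F V E /\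
    same_chi W F V E.
Proof.
  destruct HG as [Hsym Hirr].
  set (F := fun a b : {x | exists y, E x y} => E (proj1_sig a) (proj1_sig b)).
  exists {x | exists y, E x y}, F.
  split; [|split; [|split]].
  - split; unfold F; auto.
  - apply (is_minor_of_injective_hom _ _ _ _ (@proj1_sig _ _)); auto.
    intros [a Ha] [b Hb] Heq. simpl in Heq. subst. f_equal. apply proof_irrelevance.
  - intro Hiso.
    destruct (proj2 (graph_iso_has_isolated _ _ _ _ Hiso) (ex_intro _ u Hu))
      as [[x [y Hxy]] Hx].
    apply (Hx (exist _ y (ex_intro _ x (Hsym _ _ Hxy)))). exact Hxy.
  - intro K. split.
    + intros Hcol. destruct (chi_infinite_has_edge V E Hchi) as [x [y Hxy]].
      destruct Hcol as [c Hc].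
      apply (hom_to_complete_extend_induced V E (fun x => exists y, E x y)
               (fun a b Hab => conj (ex_intro _ b Hab) (ex_intro _ a (Hsym a b Hab)))
               K (c (exist _ x (ex_intro _ y Hxy)))).
      exists c. exact Hc.
    + apply (hom_to_complete_comap _ _ _ _ (@proj1_sig _ _)). auto.
Qed.

Lemma chi_minor_isolate_vertex (V : Type) (E : V -> V -> Prop)
  (HG : simple_graph V E) (Hchi : chi_infinite V E) (v : V)
  (Hno : ~ exists u, isolated V E u) :
  exists (W : Type) (F : W -> W -> Prop),
    simple_graph W F /\ is_minor W F V E /\ ~ graph_iso W F V E /\
    same_chi W F V E.
Proof.
  destruct HG as [Hsym Hirr].
  exists V, (isolate_vertex V E v).
  split; [|split; [|split]].
  - split.
    + intros x y (Hxy & Hx & Hy). repeat split; auto.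
    + intros x [Hxx _]. exact (Hirr x Hxx).
  - apply (is_minor_of_injective_hom _ _ _ _ (fun x => x)); auto.
    intros a b [Hab _]. exact Hab.
  - intro Hiso. apply Hno, (graph_iso_has_isolated _ _ _ _ Hiso).
    exists v. intros y (_ & Hv & _). auto.
  - exact (same_chi_isolate_vertex V E v Hirr Hchi).
Qed.

Theorem proposition2 (V : Type) (E : V -> V -> Prop)
  (HG : simple_graph V E) (Hchi : chi_infinite V E) :
  exists (W : Type) (F : W -> W -> Prop),
    simple_graph W F /\ is_minor W F V E /\ ~ graph_iso W F V E /\
    same_chi W F V E.
Proof.
  destruct (classic (exists u, isolated V E u)) as [[u Hu]|Hno].
  - exact (chi_minor_drop_isolated V E HG Hchi u Hu).
  - destruct (chi_infinite_has_edge V E Hchi) as [v _].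
    exact (chi_minor_isolate_vertex V E HG Hchi v Hno).
Qed.
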